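(* For every $d\geq 1$, $m(\ell_2^d)=d+1$, where $\ell_2^d$ is $\mathbb{R}^d$ with the Euclidean norm.
   Context: For a set $S$ in a normed space, its midpoint set is $M(S)=\{\tfrac12(x+y): x,y\in S,\ x\neq y\}$. A set $S$ is an M-set if every vector in $M(S)$ has norm exactly $1$ and every vector in $S$ has norm strictly greater than $1$. $m(X)$ denotes the largest cardinality of an M-set in the normed space $X$ if such a largest finite cardinality exists, and $m(X)=\infty$ otherwise. *)

(* Euclidean space R^d modelled as functions nat -> R supported on {0,...,d-1}. *)
From Stdlib Require Import Reals List.
Open Scope R_scope.

Definition in_Rd (d : nat) (x : nat -> R) : Prop := forall i, (d <= i)%nat -> x i = 0.

Fixpoint sumsq (d : nat) (x : nat -> R) : R :=
  match d with
  | O => 0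
  | S n => sumsq n x + x n * x n
  end.

Definition norm2 (d : nat) (x : nat -> R) : R := sqrt (sumsq d x).

Definition midpoint (x y : nat -> R) : nat -> R := fun i => (x i + y i) / 2.

Definition is_Mset (d : nat) (S : (nat -> R) -> Prop) : Prop :=
  (forall x, S x -> in_Rd d x) /\
  (forall x y, S x -> S y -> x <> y -> norm2 d (midpoint x y) = 1) /\
  (forall x, S x -> norm2 d x > 1).

(* Write a_i = |x_i|^2.  The midpoint condition |x_i + x_k| = 2 says
   <x_i, x_k> = 2 - (a_i + a_k)/2 for i <> k.  If an M-set had d+2 points, they
   would satisfy an affine dependence sum_i l_i x_i = 0 with sum_i l_i = 0 and
   l <> 0; expanding |sum_i l_i x_i|^2 = 0 with these inner products, everything
   cancels except sum_i l_i^2 (2 a_i - 2), which is positive since all a_i > 1.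
   Conversely, the d+1 points sqrt 2 e_i and b (1, ..., 1), where
   d b = -(sqrt 2 + sqrt (2 + 2 d)), form an M-set. *)

From Stdlib Require Import Reals List Lra Lia Psatz Classical.
From mathcomp Require ssreflect ssrfun ssrbool eqtype ssrnat fintype bigop.
From mathcomp Require ssralg ssrnum matrix mxalgebra Rstruct.
From mathcomp.algebra_tactics Require ring lra.
Open Scope R_scope.

Lemma sumsq_ge0 d x : 0 <= sumsq d x.
Proof. induction d; simpl; nra. Qed.

Lemma norm2_eq1 d x : norm2 d x = 1 <-> sumsq d x = 1.
Proof.
  unfold norm2; split; intros H.
  - rewrite <- (sqrt_sqrt (sumsq d x)) by apply sumsq_ge0. rewrite H. ring.
  - rewrite H. apply sqrt_1.
Qed.

Lemma norm2_gt1 d x : norm2 d x > 1 <-> sumsq d x > 1.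
Proof.
  unfold norm2; split; intros H.
  - apply sqrt_lt_0_alt. rewrite sqrt_1. exact H.
  - rewrite <- sqrt_1. apply sqrt_lt_1_alt. lra.
Qed.

(* The MathComp imports are confined to this module so that [theorem6] below is
   read with the Stdlib meaning of [<=] on [nat]. *)
Module MidpointSets.
Import ssreflect ssrfun ssrbool eqtype ssrnat fintype bigop.
Import ssralg ssrnum matrix mxalgebra Rstruct algebra_tactics.ring algebra_tactics.lra.
Import GRing.Theory Num.Theory.
Local Open Scope ring_scope.

Lemma affine_dependence {F : fieldType} {n d} (x : 'I_n -> 'I_d -> F) : (d.+1 < n)%N ->
  exists2 lambda : 'I_n -> F, exists i, lambda i != 0 &
    \sum_i lambda i = 0 /\ forall j, \sum_i lambda i * x i j = 0.
Proof.
move=> ltdn.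
(* The n rows of [x | 1] live in a space of dimension d + 1 < n. *)
pose A : 'M[F]_(n, d + 1) := row_mx (\matrix_(i, j) x i j) (const_mx 1).
have /rowV0Pn[v /sub_kermxP] : kermx A != 0.
  by rewrite -mxrank_eq0 mxrank_ker subn_eq0 -ltnNge (leq_ltn_trans (rank_leq_col A)) ?addn1.
rewrite mul_mx_row => /eqP; rewrite row_mx_eq0 => /andP[/eqP vX /eqP v1] v0.
exists (fun i => v ord0 i).
  apply/existsP; apply: contraNT v0 => /existsPn v0.
  by apply/eqP/rowP => i; rewrite mxE; apply/eqP/negbNE.
split; last move=> j.
  transitivity ((v *m (const_mx 1 : 'M_(n, 1))) ord0 ord0); last by rewrite v1 mxE.
  by rewrite mxE; apply: eq_bigr => i _; rewrite mxE mulr1.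
transitivity ((v *m \matrix_(i, j) x i j) ord0 j); last by rewrite vX mxE.
by rewrite mxE; apply: eq_bigr => i _; rewrite mxE.
Qed.

Section QuadraticForms.
Variables (R : comPzRingType) (n : nat) (lambda : 'I_n -> R).

Lemma sqr_sum_lincomb d (x : 'I_n -> 'I_d -> R) :
  \sum_j (\sum_i lambda i * x i j) ^+ 2 =
  \sum_i \sum_k lambda i * lambda k * \sum_j x i j * x k j.
Proof.
transitivity (\sum_j \sum_i \sum_k lambda i * x i j * (lambda k * x k j)).
  by apply: eq_bigr => j _; rewrite expr2 mulr_suml; apply: eq_bigr => i _; rewrite mulr_sumr.
rewrite exchange_big; apply: eq_bigr => i _; rewrite exchange_big.
by apply: eq_bigr => k _; rewrite mulr_sumr; apply: eq_bigr => j _; ring.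
Qed.

Lemma sum_quadform_sym (u : 'I_n -> R) : \sum_i lambda i = 0 ->
  \sum_i \sum_k lambda i * lambda k * (u i + u k) = 0.
Proof.
move=> sum0.
transitivity (\sum_i (lambda i * u i * \sum_k lambda k + lambda i * \sum_k lambda k * u k)).
  by apply: eq_bigr => i _; rewrite !mulr_sumr -big_split /=; apply: eq_bigr => k _; ring.
by rewrite big_split /= -!mulr_suml sum0 mulr0 mul0r addr0.
Qed.

Lemma sum_quadform_diag (c : 'I_n -> R) :
  \sum_i \sum_k lambda i * lambda k * ((i == k)%:R * c i) = \sum_i lambda i ^+ 2 * c i.
Proof.
apply: eq_bigr => i _; rewrite (bigD1 i) //= eqxx mul1r big1 ?addr0 => [|k ki]; first by rewrite expr2.
by rewrite eq_sym (negPf ki) mul0r mulr0.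
Qed.

End QuadraticForms.

Section MidpointFamilies.
Variable R : realFieldType.

Definition sqnorm {d} (v : 'I_d -> R) := \sum_j v j ^+ 2.

Definition Mfamily {n d} (x : 'I_n -> 'I_d -> R) :=
  (forall i k, i != k -> sqnorm (fun j => (x i j + x k j) / 2) = 1) /\
  (forall i, 1 < sqnorm (x i)).

Lemma sqnorm_midpoint d (u v : 'I_d -> R) :
  sqnorm (fun j => (u j + v j) / 2) = (sqnorm u + sqnorm v + 2 * \sum_j u j * v j) / 4.
Proof.
rewrite /sqnorm mulr_sumr -!big_split /= mulr_suml.
by apply: eq_bigr => j _; field.
Qed.

Section Bound.
Variables (n d : nat) (x : 'I_n -> 'I_d -> R).
Hypothesis Mx : Mfamily x.

Lemma Mfamily_gram i k :
  \sum_j x i j * x k j =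
  (1 - sqnorm (x i) / 2) + (1 - sqnorm (x k) / 2) + (i == k)%:R * (2 * sqnorm (x i) - 2).
Proof.
have [mid _] := Mx; have [<-|ik] := eqVneq i k.
  by rewrite mul1r /sqnorm; under eq_bigr do rewrite -expr2; lra.
by have := mid i k ik; rewrite sqnorm_midpoint mul0r addr0; lra.
Qed.

Lemma Mfamily_card_le : (n <= d.+1)%N.
Proof.
rewrite leqNgt; apply/negP => /(affine_dependence x)[lambda [i0 nz0] [sum0 comb0]].
pose a i := sqnorm (x i).
have quad0 : \sum_i lambda i ^+ 2 * (2 * a i - 2) = 0.
  rewrite -sum_quadform_diag.
  transitivity (\sum_j (\sum_i lambda i * x i j) ^+ 2 -
                \sum_i \sum_k lambda i * lambda k * ((1 - a i / 2) + (1 - a k / 2))).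
    rewrite sqr_sum_lincomb -sumrB; apply: eq_bigr => i _; rewrite -sumrB.
    by apply: eq_bigr => k _; rewrite /a Mfamily_gram; ring.
  by rewrite sum_quadform_sym // subr0 big1 // => j _; rewrite comb0 expr0n.
have a_gt1 i : 1 < a i := Mx.2 i.
have : 0 < \sum_i lambda i ^+ 2 * (2 * a i - 2).
  rewrite (bigD1 i0) //=; apply: ltr_pwDl.
    by rewrite mulr_gt0 ?exprn_even_gt0 ?nz0 ?orbT //; have := a_gt1 i0; lra.
  by apply: sumr_ge0 => i _; rewrite mulr_ge0 ?sqr_ge0 //; have := a_gt1 i; lra.
by rewrite quad0; lra.
Qed.

End Bound.
End MidpointFamilies.

Arguments sqnorm {R d}.
Arguments Mfamily {R n d}.

Section Construction.
Variables (R : realFieldType) (d : nat) (s t beta : R).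
Hypotheses (d_gt0 : (0 < d)%N) (s_ge0 : 0 <= s) (t_ge0 : 0 <= t).
Hypotheses (s_sqr : s ^+ 2 = 2) (t_sqr : t ^+ 2 = 2 + 2 * d%:R).
Hypothesis beta_def : d%:R * beta = - (s + t).

Lemma sum_delta (i : 'I_d) (c : R) : \sum_j (if j == i then c else 0) = c.
Proof. by rewrite -big_mkcond big_pred1_eq. Qed.

Lemma beta_eq : d%:R * beta ^+ 2 + 2 * s * beta = 2.
Proof.
have d0 : d%:R != 0 :> R by rewrite pnatr_eq0 -lt0n.
apply: (mulfI d0).
transitivity ((d%:R * beta) ^+ 2 + 2 * s * (d%:R * beta)); first by ring.
rewrite beta_def; transitivity (t ^+ 2 - s ^+ 2); first by ring.
by rewrite s_sqr t_sqr; ring.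
Qed.

Lemma beta_big : 1 < d%:R * beta ^+ 2.
Proof.
have d_pos : 0 < d%:R :> R by rewrite ltr0n.
rewrite -(ltr_pM2l d_pos) mulr1.
have -> : d%:R * (d%:R * beta ^+ 2) = (s + t) ^+ 2.
  by transitivity ((d%:R * beta) ^+ 2); [ring | rewrite beta_def sqrrN].
have st_ge0 : 0 <= s * t by rewrite mulr_ge0.
by rewrite sqrrD s_sqr t_sqr; lra.
Qed.

Definition axis_point (i j : 'I_d) : R := if j == i then s else 0.

Definition Mpoint (i : 'I_d.+1) : 'I_d -> R :=
  if unlift ord_max i is Some i' then axis_point i' else fun _ => beta.

Lemma sqnorm_axis_point i : sqnorm (axis_point i) = 2.
Proof.
rewrite -s_sqr -(sum_delta i (s ^+ 2)); apply: eq_bigr => j _.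
by rewrite /axis_point; case: eqP; rewrite ?expr0n.
Qed.

Lemma sqnorm_const (c : R) : sqnorm (fun _ : 'I_d => c) = d%:R * c ^+ 2.
Proof. by rewrite /sqnorm sumr_const card_ord mulr_natl. Qed.

Lemma midpoint_axis_points i k : i != k ->
  sqnorm (fun j => (axis_point i j + axis_point k j) / 2) = 1.
Proof.
move=> ik; rewrite sqnorm_midpoint !sqnorm_axis_point big1 => [|j _]; first by lra.
rewrite /axis_point; case: (j =P i) => [->|_]; last by rewrite mul0r.
by rewrite (negPf ik) mulr0.
Qed.

Lemma midpoint_axis_corner i : sqnorm (fun j => (axis_point i j + beta) / 2) = 1.
Proof.
rewrite (sqnorm_midpoint _ _ _ (fun _ => beta)) sqnorm_axis_point sqnorm_const.
rewrite -mulr_suml (sum_delta i) mulrA; have := beta_eq; lra.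
Qed.

Lemma Mfamily_Mpoint : Mfamily Mpoint.
Proof.
split=> [i k|i].
  rewrite /Mpoint; case: (unliftP ord_max i) => [i' ->|->];
    case: (unliftP ord_max k) => [k' ->|->] ik; rewrite ?liftK ?unlift_none.
  - by apply: midpoint_axis_points; apply: contraNneq ik => ->.
  - exact: midpoint_axis_corner.
  - by rewrite /sqnorm; under eq_bigr do rewrite addrC; exact: midpoint_axis_corner.
  - by rewrite eqxx in ik.
rewrite /Mpoint; case: (unliftP ord_max i) => [i' _|_].
  by rewrite sqnorm_axis_point ltr1n.
by rewrite sqnorm_const beta_big.
Qed.

End Construction.

Lemma Mfamily_exists (R : rcfType) d : (0 < d)%N ->
  exists x : 'I_d.+1 -> 'I_d -> R, Mfamily x.
Proof.
move=> d_gt0; pose t : R := Num.sqrt (2 + 2 * d%:R).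
exists (Mpoint R d (Num.sqrt 2) (- (Num.sqrt 2 + t) / d%:R)).
apply: (Mfamily_Mpoint _ _ _ t) => //; rewrite ?sqrtr_ge0 //.
- by rewrite sqr_sqrtr ?ler0n.
- by rewrite sqr_sqrtr // addr_ge0 ?mulr_ge0 ?ler0n.
- by rewrite mulrC divfK // pnatr_eq0 -lt0n.
Qed.

Lemma sumsqE d (f : nat -> R) : sumsq d f = sqnorm (fun j : 'I_d => f j).
Proof.
elim: d => [|d IH] /=; first by rewrite /sqnorm big_ord0.
by rewrite IH /sqnorm big_ord_recr expr2.
Qed.

Section Transfer.
Variable d : nat.

Definition extend (p : 'I_d -> R) : nat -> R := fun j => oapp p 0 (insub j).

Lemma extendE p (j : 'I_d) : extend p j = p j.
Proof. by rewrite /extend valK. Qed.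

Lemma extend_in_Rd p : in_Rd d (extend p).
Proof. by move=> j /leP dj; rewrite /extend insubN // -leqNgt. Qed.

Lemma sumsq_extend p : sumsq d (extend p) = sqnorm p.
Proof. by rewrite sumsqE; apply: eq_bigr => j _; rewrite extendE. Qed.

Lemma sumsq_midpoint_extend p q :
  sumsq d (midpoint (extend p) (extend q)) = sqnorm (fun j => (p j + q j) / 2).
Proof. by rewrite sumsqE; apply: eq_bigr => j _; rewrite /midpoint !extendE. Qed.

Lemma Mfamily_extend_neq {n} {x : 'I_n -> 'I_d -> R} :
  Mfamily x -> forall i k, i != k -> extend (x i) <> extend (x k).
Proof.
move=> [mid big] i k ik xik; have := mid i k ik; rewrite -sumsq_midpoint_extend -xik.
rewrite sumsq_midpoint_extend /sqnorm (eq_bigr (fun j => x i j ^+ 2)) => [|j _].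
  by have := big i; rewrite /sqnorm; lra.
by congr (_ ^+ 2); field.
Qed.

Lemma Mset_of_Mfamily n (x : 'I_n.+1 -> 'I_d -> R) : Mfamily x ->
  exists l, NoDup l /\ length l = n.+1 /\ is_Mset d (fun y => In y l).
Proof.
move=> Mx; pose pt i := extend (x (inord i)).
have pt_inj i k : (i < n.+1)%N -> (k < n.+1)%N -> pt i = pt k -> i = k.
  move=> ? ? ptik; have [//|ik] := eqVneq i k.
  case: (Mfamily_extend_neq Mx (inord i) (inord k) _ ptik).
  by apply: contra ik => /eqP/(congr1 val); rewrite /= !inordK // => /eqP.
have ptP y : In y (List.map pt (List.seq 0 n.+1)) -> exists i : 'I_n.+1, y = extend (x i).
  by move=> /in_map_iff[i [<- _]]; exists (inord i).
exists (List.map pt (List.seq 0 n.+1)); split; [|split].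
- apply: NoDup_map_NoDup_ForallPairs; last exact: seq_NoDup.
  by move=> i k /in_seq[_ /ltP ?] /in_seq[_ /ltP ?]; apply: pt_inj.
- by rewrite length_map length_seq.
split; [|split].
- by move=> y /ptP[i ->]; apply: extend_in_Rd.
- move=> y z /ptP[i ->] /ptP[k ->] yz; apply/norm2_eq1.
  by rewrite sumsq_midpoint_extend Mx.1 //; apply: contra_not_neq yz => ->.
- by move=> y /ptP[i ->]; apply/norm2_gt1; rewrite sumsq_extend; apply/RltP; apply: Mx.2.
Qed.

Lemma Mset_length_le (S : (nat -> R) -> Prop) l :
  is_Mset d S -> NoDup l -> (forall y, In y l -> S y) -> (length l <= d.+1)%coq_nat.
Proof.
move=> [_ [S_mid S_big]] l_uniq lS; apply/leP.
pose x (i : 'I_(length l)) (j : 'I_d) := List.nth i l (fun _ => 0) j.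
have l_nth (i : 'I_(length l)) : In (List.nth i l (fun _ => 0)) l by apply/nth_In/ltP.
apply: (Mfamily_card_le _ _ _ x); split=> [i k ik|i].
  have nth_neq : List.nth i l (fun _ => 0) <> List.nth k l (fun _ => 0).
    move=> nth_ik; move/eqP: ik; apply; apply: val_inj.
    by apply: (proj1 (NoDup_nth l _) l_uniq _ _ _ _ nth_ik); apply/ltP.
  by have /norm2_eq1 := S_mid _ _ (lS _ (l_nth i)) (lS _ (l_nth k)) nth_neq; rewrite sumsqE.
by have /norm2_gt1 := S_big _ (lS _ (l_nth i)); rewrite sumsqE => /RltP.
Qed.

Lemma Mset_exists : (1 <= d)%coq_nat ->
  exists l, NoDup l /\ length l = d.+1 /\ is_Mset d (fun y => In y l).
Proof. by move/leP/(Mfamily_exists R) => [x /Mset_of_Mfamily]. Qed.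

End Transfer.
End MidpointSets.

Import MidpointSets.

Lemma enum_of_bounded_NoDup {A : Type} (P : A -> Prop) N :
  (forall l, NoDup l -> (forall x, In x l -> P x) -> (length l <= N)%nat) ->
  exists l, NoDup l /\ (forall x, P x <-> In x l) /\ (length l <= N)%nat.
Proof.
  intros bound.
  assert (grow : forall m,
    (exists l, NoDup l /\ (forall x, In x l -> P x) /\ length l = m) \/
    (exists l, NoDup l /\ (forall x, P x <-> In x l))).
  { induction m as [|m [[l [l_uniq [l_P l_len]]] | enum]].
    - left. exists nil. repeat split; [constructor | intros x [] ].
    - destruct (classic (exists x, P x /\ ~ In x l)) as [[x [Px x_new]] | complete].
      + left. exists (x :: l). repeat split.
        * constructor; assumption.
        * intros y [<- | y_l]; auto.
        * simpl. lia.
      + right. exists l. split; [exact l_uniq |]. intros x; split; [| apply l_P].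
        intros Px. apply NNPP. intros x_new. apply complete. eauto.
    - right. exact enum. }
  destruct (grow (S N)) as [[l [l_uniq [l_P l_len]]] | [l [l_uniq l_enum]]].
  - specialize (bound l l_uniq l_P). lia.
  - exists l. split; [exact l_uniq | split; [exact l_enum |]].
    apply bound; [exact l_uniq |]. intros x. apply l_enum.
Qed.

Theorem theorem6 (d : nat) (hd : (1 <= d)%nat) :
  (exists l : list (nat -> R),
      NoDup l /\ length l = S d /\ is_Mset d (fun x => In x l)) /\
  (forall Sset : (nat -> R) -> Prop, is_Mset d Sset ->
      exists l : list (nat -> R),
        NoDup l /\ (forall x, Sset x <-> In x l) /\ (length l <= S d)%nat).
Proof.
  split.
  - exact (Mset_exists d hd).
  - intros S S_M. apply enum_of_bounded_NoDup. intros l l_uniq l_S.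
    exact (Mset_length_le d S l S_M l_uniq l_S).
Qed.
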